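(* Let $f$ be a symmetric norm on $\mathbb R^n$, $\mathcal H$ a complex Hilbert space with $\dim\mathcal H\ge n$, and $\|A\|=f(s_1(A),\dots,s_n(A))$ for $A\in\mathcal B(\mathcal H)$. Let $\mathcal S\subseteq\mathbb R^n$ be any compact set of vectors $c=(c_1,\dots,c_n)$ with $c_1\ge\cdots\ge c_n\ge0$ such that $\|A\|=\max\{\sum_{j=1}^n c_js_j(A): c\in\mathcal S\}$ for all $A\in\mathcal B(\mathcal H)$. Then $\|\cdot\|$ is submultiplicative (i.e. $\|AB\|\le\|A\|\|B\|$ for all $A,B\in\mathcal B(\mathcal H)$) if and only if any one of the following holds: (1) $\|A\|\ge s_1(A)$ for all $A\in\mathcal B(\mathcal H)$; (2) there are unit vectors $x,y\in\mathcal H$ such that $\|xy^*\|\ge1$; (3) $f(e_1)\ge1$, equivalently, there is $(c_1,\dots,c_n)\in\mathcal S$ with $c_1\ge1$. Moreover, $\|\cdot\|$ is an algebra norm (submultiplicative with $\|I\|=1$) if and only if it is the operator norm.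
   Context: $\mathcal B(\mathcal H)$ is the algebra of bounded linear operators on $\mathcal H$; $s_k(A)=\inf\{\|A-X\|_{\rm sp}:\operatorname{rank}X<k\}$ is the $k$th singular value, with $\|\cdot\|_{\rm sp}$ the operator norm. A norm $f$ on $\mathbb R^n$ is symmetric if $f(Px)=f(x)$ for all $x$ and every permutation or diagonal orthogonal matrix $P$. $e_1$ is the first standard basis vector of $\mathbb R^n$; $xy^*$ denotes $v\mapsto\langle v,y\rangle x$. (Such a set $\mathcal S$ always exists.) *)

From HB Require Import structures.
From mathcomp Require Import all_boot all_order all_algebra all_fingroup.
From mathcomp Require Import all_classical all_reals all_analysis.
From mathcomp Require Import complex.
Set Implicit Arguments. Unset Strict Implicit. Unset Printing Implicit Defensive.
Import Order.TTheory GRing.Theory Num.Theory.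
Import numFieldNormedType.Exports.
Local Open Scope ring_scope.
Local Open Scope classical_set_scope.

Section Hilbert.
Variable R : realType.
Variable V : lmodType R[i].
Variable ip : V -> V -> R[i].

Definition hnorm (v : V) : R := Num.sqrt (complex.Re (ip v v)).

Definition is_hilbert : Prop :=
  [/\ (forall (a : R[i]) (u v w : V), ip (a *: u + v) w = a * ip u w + ip v w),
      (forall u v : V, ip v u = conjc (ip u v)),
      (forall v : V, 0 <= complex.Re (ip v v) /\ complex.Im (ip v v) = 0),
      (forall v : V, ip v v = 0 -> v = 0) &
      (forall u : nat -> V,
         (forall e : R, 0 < e -> exists N : nat, forall m k : nat,
             (N <= m)%N -> (N <= k)%N -> hnorm (u m - u k) < e) ->
         exists l : V, forall e : R, 0 < e -> exists N : nat, forall m : nat,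
             (N <= m)%N -> hnorm (u m - l) < e)].

Definition dim_ge (n : nat) : Prop :=
  exists e : 'I_n -> V, forall i j : 'I_n, ip (e i) (e j) = (i == j)%:R.

Definition bounded_linear (A : V -> V) : Prop :=
  (forall (a : R[i]) (u v : V), A (a *: u + v) = a *: A u + A v) /\
  exists M : R, forall v : V, hnorm (A v) <= M * hnorm v.

Definition opnorm (A : V -> V) : R :=
  sup [set hnorm (A v) | v in [set v : V | hnorm v <= 1]].

Definition rank_lt (X : V -> V) (k : nat) : Prop :=
  exists s : seq V, (size s < k)%N /\
    forall v : V, exists c : 'I_(size s) -> R[i],
      X v = \sum_(i < size s) c i *: s`_i.

(* k-th singular value (approximation number), k >= 1 *)
Definition singval (k : nat) (A : V -> V) : R :=
  inf [set opnorm (fun v => A v - X v) |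
        X in [set X : V -> V | bounded_linear X /\ rank_lt X k]].

Definition singvals (n : nat) (A : V -> V) : 'rV[R]_n :=
  \row_(j < n) singval j.+1 A.

Definition rank_one (x y : V) : V -> V := fun v => ip v y *: x.

End Hilbert.

Definition is_norm (R : realType) (n : nat) (f : 'rV[R]_n -> R) : Prop :=
  [/\ (forall x, 0 <= f x),
      (forall x, f x = 0 -> x = 0),
      (forall (a : R) x, f (a *: x) = `|a| * f x) &
      (forall x y, f (x + y) <= f x + f y)].

Definition diag_orthogonal (R : realType) (n : nat) (P : 'M[R]_n) : Prop :=
  is_diag_mx P /\ P *m P^T = 1%:M.

(* f(Px) = f(x) for permutation or diagonal orthogonal P (vectors are rows) *)
Definition symmetric_norm (R : realType) (n : nat) (f : 'rV[R]_n -> R) : Prop :=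
  is_norm f /\
  (forall P : 'M[R]_n, (is_perm_mx P \/ diag_orthogonal P) ->
     forall x : 'rV[R]_n, f (x *m P^T) = f x).

Definition e1 (R : realType) (n : nat) : 'rV[R]_n :=
  \row_(j < n) ((j : nat) == 0%N)%:R.

From HB Require Import structures.
From mathcomp Require Import all_boot all_order all_algebra all_fingroup.
From mathcomp Require Import all_classical all_reals all_analysis.
From mathcomp Require Import complex.
From mathcomp Require Import ring lra.
Set Implicit Arguments. Unset Strict Implicit. Unset Printing Implicit Defensive.
Import Order.TTheory GRing.Theory Num.Theory.
Import numFieldNormedType.Exports.
Local Open Scope ring_scope.
Local Open Scope classical_set_scope.

(* Three facts about
   approximation numbers carry the proof: s_1(A) = ||A||_op,
   s_j(AB) <= ||A||_op s_j(B), and for unit vectors x, y the rank-one operator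
   xy^* has singular values e_1, so ||xy^*|| = f(e_1) = max_{c in S} c_1.
   The second fact gives ||AB|| <= ||A||_op ||B|| = s_1(A) ||B||, hence
   submultiplicativity as soon as s_1 <= ||.||, which holds when some c in S
   has c_1 >= 1; conversely the idempotent xx^* forces f(e_1) <= f(e_1)^2.
   Finally s_j(I) >= 1 for j <= n, since the span of j orthonormal vectors
   meets the orthogonal complement of the range of any operator of rank < j;
   so ||I|| = 1 forces sum_j c_j <= 1, and then ||A|| <= s_1(A). *)

Section LinearFor.
Variables (K : pzRingType) (U : lmodType K) (W : zmodType) (s : GRing.Scale.law K W).
Variables (f : U -> W) (fL : linear_for s f).

Let linear_of : {linear U -> W | s} := HB.pack f (GRing.isLinear.Build K U W s f fL).

Lemma linear_for0 : f 0 = 0. Proof. exact: (raddf0 linear_of). Qed.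
Lemma linear_forD : {morph f : u v / u + v}. Proof. exact: (raddfD linear_of). Qed.
Lemma linear_forB : {morph f : u v / u - v}. Proof. exact: (raddfB linear_of). Qed.
Lemma linear_forZ a u : f (a *: u) = s a (f u). Proof. exact: (linearZ_LR linear_of). Qed.
Lemma linear_for_sum (I : finType) (F : I -> U) : f (\sum_i F i) = \sum_i f (F i).
Proof. exact: (raddf_sum linear_of). Qed.

End LinearFor.

Section InnerProductSpace.
Variables (R : realType) (V : lmodType R[i]) (ip : V -> V -> R[i]).
Local Open Scope complex_scope.

Definition inner_product : Prop :=
  [/\ forall w, scalar (ip ^~ w),
      forall u v, ip v u = conjc (ip u v),
      forall v, 0 <= complex.Re (ip v v) /\ complex.Im (ip v v) = 0 &
      forall v, ip v v = 0 -> v = 0].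

Lemma hilbert_inner_product : is_hilbert ip -> inner_product.
Proof. by case=> ipl ipJ ipge0 ipdef _; split=> // w a u v; apply: ipl. Qed.

Hypothesis ipP : inner_product.
Local Notation hn := (hnorm ip).

Lemma ipC u v : ip v u = conjc (ip u v).
Proof. by case: ipP. Qed.

Let ip_scalarl w : scalar (ip ^~ w).
Proof. by case: ipP. Qed.

Lemma ip0l w : ip 0 w = 0. Proof. exact: linear_for0 (ip_scalarl w). Qed.
Lemma ipDl w u v : ip (u + v) w = ip u w + ip v w.
Proof. exact: linear_forD (ip_scalarl w) u v. Qed.
Lemma ipBl w u v : ip (u - v) w = ip u w - ip v w.
Proof. exact: linear_forB (ip_scalarl w) u v. Qed.
Lemma ipZl a u w : ip (a *: u) w = a * ip u w.
Proof. exact: (linear_forZ (ip_scalarl w) a u). Qed.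
Lemma ip_suml (I : finType) (F : I -> V) w : ip (\sum_i F i) w = \sum_i ip (F i) w.
Proof. exact: (linear_for_sum (ip_scalarl w) F). Qed.

Lemma ip0r w : ip w 0 = 0. Proof. by rewrite ipC ip0l conjc0. Qed.
Lemma ipDr w u v : ip w (u + v) = ip w u + ip w v.
Proof. by rewrite ipC ipDl rmorphD /= -!ipC. Qed.
Lemma ipBr w u v : ip w (u - v) = ip w u - ip w v.
Proof. by rewrite ipC ipBl rmorphB /= -!ipC. Qed.
Lemma ipZr a u w : ip w (a *: u) = conjc a * ip w u.
Proof. by rewrite ipC ipZl rmorphM /= -!ipC. Qed.
Lemma ip_sumr (I : finType) (F : I -> V) w : ip w (\sum_i F i) = \sum_i ip w (F i).
Proof. by rewrite ipC ip_suml rmorph_sum; apply: eq_bigr => i _ /=; rewrite -ipC. Qed.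

Lemma hnorm_ge0 v : 0 <= hn v.
Proof. exact: sqrtr_ge0. Qed.

Lemma ip_self v : ip v v = (hn v)%:C ^+ 2.
Proof.
case: ipP => _ _ /(_ v) [Re_ge0 Im0] _.
by rewrite -rmorphXn /hnorm sqr_sqrtr //; move: Im0; case: (ip v v) => a b /= ->.
Qed.

Lemma hnorm0 : hn 0 = 0.
Proof. by rewrite /hnorm ip0l sqrtr0. Qed.

Lemma hnorm_eq0 v : (hn v == 0) = (v == 0).
Proof.
apply/eqP/eqP=> [hv0|->]; last exact: hnorm0.
by case: ipP => _ _ _; apply; rewrite ip_self hv0 expr0n.
Qed.

Lemma hnorm_gt0 v : (0 < hn v) = (v != 0).
Proof. by rewrite lt_def hnorm_eq0 hnorm_ge0 andbT. Qed.

Lemma hnormC_ge0 v : 0 <= (hn v)%:C.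
Proof. by rewrite lecR hnorm_ge0. Qed.

Lemma hnormZ a v : (hn (a *: v))%:C = `|a| * (hn v)%:C.
Proof.
apply: (@pexpIrn _ 2) => //; rewrite ?nnegrE ?mulr_ge0 ?hnormC_ge0 //.
by rewrite -ip_self ipZl ipZr exprMn sqr_normc -ip_self mulrA.
Qed.

Lemma hnormZr (r : R) v : hn (r%:C *: v) = `|r| * hn v.
Proof.
apply: complexI; rewrite hnormZ rmorphM /=; congr (_ * _).
by rewrite normc_def /= expr0n addr0 sqrtr_sqr.
Qed.

Lemma hnorm_normalize v : v != 0 -> hn ((hn v)^-1%:C *: v) = 1.
Proof.
by move=> v_neq0; rewrite hnormZr ger0_norm ?invr_ge0 ?hnorm_ge0 // mulVf ?hnorm_eq0.
Qed.

Lemma normr_ip_unit_le v y : hn y = 1 -> `|ip v y| <= (hn v)%:C.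
Proof.
move=> hy; set a := ip v y.
have expand : ip (v - a *: y) (v - a *: y) = ip v v - a * conjc a.
  have yy : ip y y = 1 by rewrite ip_self hy expr1n.
  by rewrite ipBl !ipBr !ipZl !ipZr yy [ip y v]ipC -/a; ring.
rewrite -(@ler_pXn2r _ 2) ?nnegrE ?normr_ge0 ?hnormC_ge0 // sqr_normc -ip_self.
by rewrite -subr_ge0 -expand ip_self exprn_ge0 ?hnormC_ge0.
Qed.

Lemma normr_ip_le u w : `|ip u w| <= (hn u * hn w)%:C.
Proof.
have [->|w_neq0] := eqVneq w 0; first by rewrite ip0r normr0 hnorm0 mulr0.
have hwC : (hn w)%:C != 0 by rewrite fmorph_eq0 hnorm_eq0.
have := normr_ip_unit_le u (hnorm_normalize w_neq0).
rewrite ipZr conjc_real normrM ger0_norm; last by rewrite lecR invr_ge0 hnorm_ge0.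
move=> h; rewrite rmorphM mulrC -(mulVKf hwC `|ip u w|).
by rewrite ler_wpM2l ?hnormC_ge0 // -fmorphV.
Qed.

Lemma hnormD u w : hn (u + w) <= hn u + hn w.
Proof.
have Re_le : complex.Re (ip u w) <= hn u * hn w.
  rewrite -lecR; apply: le_trans (normr_ip_le u w); apply: le_trans (normc_ge_Re _).
  by rewrite lecR ler_norm.
rewrite -lecR -(@ler_pXn2r _ 2) ?nnegrE ?hnormC_ge0 ?lecR ?addr_ge0 ?hnorm_ge0 //.
rewrite -ip_self ipDl !ipDr [ip w u]ipC.
have -> : ip u u + ip u w + (conjc (ip u w) + ip w w) =
           ip u u + ip w w + (ip u w + conjc (ip u w)) by ring.
rewrite addcJ !ip_self -!rmorphXn lecE /=; simpc; rewrite sqrrD; lra.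
Qed.

Lemma hnormN v : hn (- v) = hn v.
Proof. by rewrite -scaleN1r -(rmorphN1 (real_complex R)) hnormZr normrN1 mul1r. Qed.

Lemma hnorm_le_subr_orth v w : ip v w = 0 -> hn v <= hn (v - w).
Proof.
move=> vw; rewrite -lecR -(@ler_pXn2r _ 2) ?nnegrE ?hnormC_ge0 // -!ip_self.
rewrite ipBl !ipBr vw [ip w v]ipC vw conjc0 !subr0 sub0r opprK.
by rewrite lerDl ip_self exprn_ge0 ?hnormC_ge0.
Qed.

End InnerProductSpace.

Section BoundedOperators.
Variables (R : realType) (V : lmodType R[i]) (ip : V -> V -> R[i]).
Hypothesis ipP : inner_product ip.
Local Notation hn := (hnorm ip).
Local Notation bl := (bounded_linear ip).
Local Open Scope complex_scope.

Lemma bounded_linearW A : bl A -> linear A.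
Proof. by case. Qed.

Lemma bounded_linear_id : bl id.
Proof. by split=> //; exists 1 => v; rewrite mul1r. Qed.

Lemma bounded_linear0 : bl (fun=> 0).
Proof.
split=> [a u v|]; first by rewrite scaler0 addr0.
by exists 0 => v; rewrite mul0r hnorm0.
Qed.

Lemma bounded_linearB A B : bl A -> bl B -> bl (fun v => A v - B v).
Proof.
move=> [lA [MA hA]] [lB [MB hB]]; split=> [a u v|].
  by rewrite lA lB scalerBr addrACA opprD.
exists (MA + MB) => v; rewrite mulrDl; apply: le_trans (hnormD ipP _ _) _.
by rewrite hnormN //; apply: lerD.
Qed.

Let unit_ball_image A := [set hn (A v) | v in [set v : V | hn v <= 1]].

Let unit_ball_image_neq0 A : unit_ball_image A !=set0.
Proof. by exists (hn (A 0)), 0; rewrite //= hnorm0 ?ler01. Qed.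

Lemma opnorm_ge0 A : 0 <= opnorm ip A.
Proof.
rewrite /opnorm -/(unit_ball_image A).
have [supA|/sup_out ->//] := pselect (has_sup (unit_ball_image A)).
apply: le_trans (hnorm_ge0 ip (A 0)) _; apply: sup_upper_bound => //.
by exists 0; rewrite //= hnorm0 ?ler01.
Qed.

Lemma opnorm_le A c : (forall v, hn v <= 1 -> hn (A v) <= c) -> opnorm ip A <= c.
Proof.
move=> Ac; apply: ge_sup; first exact: unit_ball_image_neq0.
by move=> _ [v hv <-]; apply: Ac.
Qed.

Lemma opnorm_ge A v : bl A -> hn v <= 1 -> hn (A v) <= opnorm ip A.
Proof.
case=> _ [M AM] hv; apply: sup_upper_bound; last by exists v.
split; first exact: unit_ball_image_neq0.
exists `|M| => _ [w hw <-]; apply: le_trans (AM w) _.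
apply: le_trans (ler_norm _) _.
by rewrite normrM [`|hn w|]ger0_norm ?hnorm_ge0 // ler_piMr.
Qed.

Lemma opnorm_bound A v : bl A -> hn (A v) <= opnorm ip A * hn v.
Proof.
move=> blA; have [->|v_neq0] := eqVneq v 0.
  by rewrite (linear_for0 (bounded_linearW blA)) hnorm0 // mulr0.
have hv1 : hn ((hn v)^-1%:C *: v) <= 1 by rewrite hnorm_normalize.
have := opnorm_ge blA hv1.
rewrite (linear_forZ (bounded_linearW blA)) /= hnormZr //.
rewrite ger0_norm ?invr_ge0 ?hnorm_ge0 //.
by rewrite ler_pdivrMl ?hnorm_gt0 // mulrC.
Qed.

Lemma bounded_linear_comp A B : bl A -> bl B -> bl (A \o B).
Proof.
move=> blA blB; split=> [a u v|].
  by rewrite /= (bounded_linearW blB) (bounded_linearW blA).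
exists (opnorm ip A * opnorm ip B) => v /=; apply: le_trans (opnorm_bound _ blA) _.
by rewrite -mulrA ler_wpM2l ?opnorm_ge0 ?opnorm_bound.
Qed.

Lemma opnorm_comp_le A B : bl A -> bl B ->
  opnorm ip (A \o B) <= opnorm ip A * opnorm ip B.
Proof.
move=> blA blB; apply: opnorm_le => v hv; apply: le_trans (opnorm_bound _ blA) _.
apply: ler_wpM2l; first exact: opnorm_ge0.
apply: le_trans (opnorm_bound _ blB) _.
by rewrite ler_piMr ?opnorm_ge0.
Qed.

Lemma opnorm_id x : hn x = 1 -> opnorm ip id = 1.
Proof.
move=> hx; apply/le_anti/andP; split; first exact: opnorm_le.
rewrite -[X in X <= _]hx; apply: (@opnorm_ge id) => //; last by rewrite hx.
exact: bounded_linear_id.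
Qed.

End BoundedOperators.

Section ApproximationNumbers.
Variables (R : realType) (V : lmodType R[i]) (ip : V -> V -> R[i]).
Hypothesis ipP : inner_product ip.
Local Notation bl := (bounded_linear ip).

Lemma rank_lt_mono (X : V -> V) k l : (k <= l)%N -> rank_lt X k -> rank_lt X l.
Proof. by move=> kl [s [sk sX]]; exists s; split=> //; apply: leq_trans kl. Qed.

Lemma rank_lt0 k : (0 < k)%N -> rank_lt (fun=> 0 : V) k.
Proof.
by move=> k_gt0; exists [::]; split=> // v; exists (fun=> 0); rewrite big_ord0.
Qed.

Lemma rank_lt1_eq0 (X : V -> V) v : rank_lt X 1 -> X v = 0.
Proof. by case=> s [sk /(_ v) [c ->]]; case: s c sk => [c _|//]; apply: big_ord0. Qed.

Lemma rank_lt_comp (A X : V -> V) k : linear A -> rank_lt X k -> rank_lt (A \o X) k.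
Proof.
move=> lA [s [sk sX]]; exists (map A s); rewrite size_map; split=> // v /=.
have [c ->] := sX v; exists c; rewrite (linear_for_sum lA); apply: eq_bigr => i _.
by rewrite (linear_forZ lA) (nth_map 0).
Qed.

Lemma singval_le A k X : bl X -> rank_lt X k ->
  singval ip k A <= opnorm ip (fun v => A v - X v).
Proof.
move=> blX rkX; apply: ge_inf; last by exists X.
by exists 0 => _ [Y _ <-]; apply: opnorm_ge0.
Qed.

Lemma singval_ge A k c : (0 < k)%N ->
  (forall X, bl X -> rank_lt X k -> c <= opnorm ip (fun v => A v - X v)) ->
  c <= singval ip k A.
Proof.
move=> k_gt0 cX; apply: lb_le_inf; last by move=> _ [X [blX rkX] <-]; apply: cX.
exists (opnorm ip (fun v => A v - 0)), (fun=> 0) => //.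
by split; [exact: bounded_linear0 | exact: rank_lt0].
Qed.

Lemma singval_ge0 A k : (0 < k)%N -> 0 <= singval ip k A.
Proof. by move=> k_gt0; apply: singval_ge => // X _ _; apply: opnorm_ge0. Qed.

Lemma singval_le_opnorm A k : (0 < k)%N -> singval ip k A <= opnorm ip A.
Proof.
move=> k_gt0; have := singval_le A (bounded_linear0 ipP) (rank_lt0 k_gt0).
by congr (_ <= opnorm ip _); apply: funext => v; rewrite subr0.
Qed.

Lemma singval1 A : singval ip 1 A = opnorm ip A.
Proof.
apply/le_anti/andP; split; first exact: singval_le_opnorm.
apply: singval_ge => // X _ rkX.
suff -> : (fun v => A v - X v) = A by [].
by apply: funext => v; rewrite (rank_lt1_eq0 v rkX) subr0.
Qed.

Lemma singval_comp_le A B k : bl A -> bl B -> (0 < k)%N ->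
  singval ip k (A \o B) <= opnorm ip A * singval ip k B.
Proof.
move=> blA blB k_gt0.
have AB_le X : bl X -> rank_lt X k ->
    singval ip k (A \o B) <= opnorm ip A * opnorm ip (fun v => B v - X v).
  move=> blX rkX; have blAX := bounded_linear_comp ipP blA blX.
  apply: le_trans (singval_le _ blAX (rank_lt_comp (bounded_linearW blA) rkX)) _.
  have -> : (fun v => (A \o B) v - (A \o X) v) = A \o (fun v => B v - X v).
    by apply: funext => v /=; rewrite (linear_forB (bounded_linearW blA)).
  exact: opnorm_comp_le (bounded_linearB ipP blB blX).
have [A0|A_neq0] := eqVneq (opnorm ip A) 0.
  by have := AB_le _ (bounded_linear0 ipP) (rank_lt0 k_gt0); rewrite A0 !mul0r.
have A_gt0 : 0 < opnorm ip A by rewrite lt_def A_neq0 opnorm_ge0.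
rewrite -ler_pdivrMl //; apply: singval_ge => // X blX rkX.
by rewrite ler_pdivrMl // AB_le.
Qed.

End ApproximationNumbers.

Section RankOne.
Variables (R : realType) (V : lmodType R[i]) (ip : V -> V -> R[i]).
Hypothesis ipP : inner_product ip.
Local Notation hn := (hnorm ip).
Variables (x y : V).
Hypotheses (hx : hn x = 1) (hy : hn y = 1).

Lemma hnorm_rank_one_le v : hn (rank_one ip x y v) <= hn v.
Proof. by rewrite -lecR (hnormZ ipP) hx mulr1 (normr_ip_unit_le ipP). Qed.

Lemma bounded_linear_rank_one : bounded_linear ip (rank_one ip x y).
Proof.
split=> [a u v|]; first by rewrite /rank_one (ipDl ipP) (ipZl ipP) scalerDl scalerA.
by exists 1 => v; rewrite mul1r hnorm_rank_one_le.
Qed.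

Lemma opnorm_rank_one : opnorm ip (rank_one ip x y) = 1.
Proof.
apply/le_anti/andP; split.
  by apply: (opnorm_le ipP) => v; apply: le_trans (hnorm_rank_one_le v).
have <- : hn (rank_one ip x y y) = 1 by rewrite /rank_one (ip_self ipP) hy expr1n scale1r.
by apply: (opnorm_ge ipP); [exact: bounded_linear_rank_one | rewrite hy].
Qed.

Lemma singval_rank_one k : (1 < k)%N -> singval ip k (rank_one ip x y) = 0.
Proof.
move=> k_gt1; apply/le_anti/andP; split; last exact/(singval_ge0 ipP)/ltnW.
have rk : rank_lt (rank_one ip x y) k.
  apply: rank_lt_mono k_gt1 _; exists [:: x]; split=> // v.
  by exists (fun=> ip v y); rewrite big_ord1.
apply: le_trans (singval_le ipP _ bounded_linear_rank_one rk) _.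
by apply: (opnorm_le ipP) => v _; rewrite subrr (hnorm0 ipP).
Qed.

Lemma singvals_rank_one n : singvals ip n (rank_one ip x y) = e1 R n.
Proof.
apply/rowP => -[[|j] j_lt]; rewrite !mxE /=.
  by rewrite (singval1 ipP) opnorm_rank_one.
by rewrite singval_rank_one.
Qed.

Lemma rank_one_idem : rank_one ip x x \o rank_one ip x x = rank_one ip x x.
Proof.
apply: funext => v.
by rewrite /rank_one /= (ipZl ipP) (ip_self ipP) hx expr1n mulr1.
Qed.

End RankOne.

Section IdentityApproximation.
Variables (R : realType) (V : lmodType R[i]) (ip : V -> V -> R[i]).
Hypothesis ipP : inner_product ip.
Local Notation hn := (hnorm ip).

Lemma dim_ge_le j n : (j <= n)%N -> dim_ge ip n -> dim_ge ip j.
Proof. by move=> jn [e he]; exists (fun k => e (widen_ord jn k)) => k l; rewrite he. Qed.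

Lemma exists_orthogonal j (s : seq V) : dim_ge ip j -> (size s < j)%N ->
  exists2 v, v != 0 & forall i : 'I_(size s), ip v s`_i = 0.
Proof.
move=> [E hE] sj; pose M := \matrix_(k < j, i < size s) ip (E k) s`_i.
have : kermx M != 0.
  by rewrite -mxrank_eq0 mxrank_ker subn_eq0 -ltnNge (leq_ltn_trans (rank_leq_col M)).
case/rowV0Pn => a /sub_kermxP aM a_neq0; pose v := \sum_k a 0 k *: E k.
have coordE l : ip v (E l) = a 0 l.
  rewrite (ip_suml ipP) (bigD1 l) //= (ipZl ipP) hE eqxx mulr1 big1 ?addr0 // => k kl.
  by rewrite (ipZl ipP) hE (negbTE kl) mulr0.
exists v.
  apply: contraNneq a_neq0 => v0; apply/eqP/rowP => l.
  by rewrite -coordE v0 (ip0l ipP) mxE.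
move=> i; have := congr1 (fun B : 'M[R[i]]_(1, size s) => B 0 i) aM.
rewrite !mxE => <-.
by rewrite (ip_suml ipP); apply: eq_bigr => k _; rewrite (ipZl ipP) mxE.
Qed.

Lemma singval_id_ge1 j : dim_ge ip j -> (0 < j)%N -> 1 <= singval ip j id.
Proof.
move=> dimj j_gt0; apply: (singval_ge ipP) => // X blX [s [sj sX]].
have [v v_neq0 vs] := exists_orthogonal dimj sj.
have vX : ip v (X v) = 0.
  have [c ->] := sX v; rewrite (ip_sumr ipP) big1 // => i _.
  by rewrite (ipZr ipP) vs mulr0.
rewrite -(ler_pM2r (_ : 0 < hn v)) ?(hnorm_gt0 ipP) // mul1r.
apply: le_trans (hnorm_le_subr_orth ipP vX) _.
exact: (opnorm_bound ipP v (bounded_linearB ipP (bounded_linear_id ip) blX)).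
Qed.

End IdentityApproximation.

Section SingularValueNorm.
Variables (R : realType) (n : nat) (n_gt0 : (0 < n)%N).
Variables (f : 'rV[R]_n -> R) (V : lmodType R[i]) (ip : V -> V -> R[i]).
Variable S : set 'rV[R]_n.
Hypotheses (fN : is_norm f) (ipP : inner_product ip).
Hypothesis S_ge0 : forall c, S c -> forall j, 0 <= c ord0 j.
Local Notation hn := (hnorm ip).
Local Notation bl := (bounded_linear ip).
Local Notation nrm A := (f (singvals ip n A)).

Definition weighted_singvals (c : 'rV[R]_n) (A : V -> V) :=
  \sum_(j < n) c ord0 j * singval ip j.+1 A.

Hypothesis norm_max : forall A, bl A ->
  (exists2 c, S c & nrm A = weighted_singvals c A) /\
  (forall c, S c -> weighted_singvals c A <= nrm A).

Let i0 := Ordinal n_gt0.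

Let f_ge0 x : 0 <= f x. Proof. by case: fN. Qed.
Let f_eq0 x : f x = 0 -> x = 0. Proof. by case: fN => _ f_eq0 _ _; apply: f_eq0. Qed.

Lemma weighted_singvals_rank_one c x y : hn x = 1 -> hn y = 1 ->
  weighted_singvals c (rank_one ip x y) = c ord0 i0.
Proof.
move=> hx hy; rewrite /weighted_singvals (bigD1 i0) //= (singval1 ipP).
rewrite opnorm_rank_one // mulr1 big1 ?addr0 // => -[[|j] j_lt] //= _.
by rewrite singval_rank_one // mulr0.
Qed.

Lemma f_e1_ge1P x : hn x = 1 -> 1 <= f (e1 R n) <-> exists2 c, S c & 1 <= c ord0 i0.
Proof.
move=> hx; have [[c Sc]] := norm_max (bounded_linear_rank_one ipP hx hx).
rewrite singvals_rank_one // => ->; rewrite weighted_singvals_rank_one // => c_max.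
split=> [c_ge1|[d Sd d_ge1]]; first by exists c.
by apply: le_trans d_ge1 _; rewrite -(weighted_singvals_rank_one d hx hx) c_max.
Qed.

Lemma weighted_singvals_ge_singval1 c A : S c ->
  c ord0 i0 * singval ip 1 A <= weighted_singvals c A.
Proof.
move=> Sc; rewrite /weighted_singvals (bigD1 i0) //= lerDl.
by apply: sumr_ge0 => j _; rewrite mulr_ge0 ?S_ge0 ?(singval_ge0 ipP).
Qed.

Lemma singval1_le_norm : (exists2 c, S c & 1 <= c ord0 i0) ->
  forall A, bl A -> singval ip 1 A <= nrm A.
Proof.
move=> [c Sc c_ge1] A blA; apply: le_trans (proj2 (norm_max blA) c Sc).
apply: le_trans (weighted_singvals_ge_singval1 A Sc).
by rewrite ler_peMl ?(singval_ge0 ipP).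
Qed.

Lemma weighted_singvals_comp_le c A B : S c -> bl A -> bl B ->
  weighted_singvals c (A \o B) <= opnorm ip A * weighted_singvals c B.
Proof.
move=> Sc blA blB; rewrite mulr_sumr; apply: ler_sum => j _.
by rewrite mulrCA ler_wpM2l ?S_ge0 ?(singval_comp_le ipP).
Qed.

Lemma norm_comp_le A B : bl A -> bl B -> nrm (A \o B) <= opnorm ip A * nrm B.
Proof.
move=> blA blB; have [[c Sc ->] _] := norm_max (bounded_linear_comp ipP blA blB).
apply: le_trans (weighted_singvals_comp_le Sc blA blB) _.
by rewrite ler_wpM2l ?(opnorm_ge0 ipP) ?(proj2 (norm_max blB)).
Qed.

Lemma norm_submult : (forall A, bl A -> singval ip 1 A <= nrm A) ->
  forall A B, bl A -> bl B -> nrm (A \o B) <= nrm A * nrm B.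
Proof.
move=> s1_le A B blA blB; apply: le_trans (norm_comp_le blA blB) _.
by rewrite ler_wpM2r // -(singval1 ipP) s1_le.
Qed.

Lemma submult_f_e1_ge1 x : hn x = 1 ->
  (forall A B, bl A -> bl B -> nrm (A \o B) <= nrm A * nrm B) -> 1 <= f (e1 R n).
Proof.
move=> hx submult; have blP := bounded_linear_rank_one ipP hx hx.
have e1_gt0 : 0 < f (e1 R n).
  rewrite lt_def f_ge0 andbT; apply/eqP => /f_eq0 /rowP /(_ i0) /eqP.
  by rewrite !mxE oner_eq0.
by have := submult _ _ blP blP; rewrite rank_one_idem // singvals_rank_one // ler_pMr.
Qed.

Lemma weighted_singvals_le_id c A : dim_ge ip n -> S c ->
  weighted_singvals c A <= opnorm ip A * weighted_singvals c id.
Proof.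
move=> dimn Sc; rewrite mulr_sumr; apply: ler_sum => -[j j_lt] _.
rewrite mulrCA ler_wpM2l ?S_ge0 //.
apply: le_trans (singval_le_opnorm ipP A (ltn0Sn j)) _.
by rewrite ler_peMr ?(opnorm_ge0 ipP) ?(singval_id_ge1 ipP (dim_ge_le j_lt dimn)).
Qed.

Lemma norm_le_opnorm : dim_ge ip n -> nrm id <= 1 ->
  forall A, bl A -> nrm A <= opnorm ip A.
Proof.
move=> dimn id_le1 A blA; have [[c Sc ->] _] := norm_max blA.
apply: le_trans (weighted_singvals_le_id A dimn Sc) _.
rewrite ler_piMr ?(opnorm_ge0 ipP) //.
exact: le_trans (proj2 (norm_max (bounded_linear_id ip)) c Sc) id_le1.
Qed.

End SingularValueNorm.

Theorem proposition2p4 (R : realType) (n : nat) (hn : (0 < n)%N)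
  (f : 'rV[R]_n -> R) (hf : symmetric_norm f)
  (V : lmodType R[i]) (ip : V -> V -> R[i])
  (hH : is_hilbert ip) (hdim : dim_ge ip n)
  (S : set 'rV[R]_n) (hScpt : compact S)
  (hSord : forall c : 'rV[R]_n, S c ->
     (forall i j : 'I_n, (i <= j)%N -> c ord0 j <= c ord0 i) /\
     (forall i : 'I_n, 0 <= c ord0 i))
  (hSmax : forall A : V -> V, bounded_linear ip A ->
     (exists2 c : 'rV[R]_n, S c &
        f (singvals ip n A) = \sum_(j < n) c ord0 j * singval ip j.+1 A) /\
     (forall c : 'rV[R]_n, S c ->
        \sum_(j < n) c ord0 j * singval ip j.+1 A <= f (singvals ip n A))) :
  let nrm := fun A : V -> V => f (singvals ip n A) in
  let submult := forall A B : V -> V, bounded_linear ip A -> bounded_linear ip B ->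
                   nrm (A \o B) <= nrm A * nrm B in
  [/\ submult <-> (forall A : V -> V, bounded_linear ip A -> singval ip 1 A <= nrm A),
      submult <-> (exists x y : V, [/\ hnorm ip x = 1, hnorm ip y = 1 &
                                        1 <= nrm (rank_one ip x y)]),
      submult <-> 1 <= f (e1 R n),
      (1 <= f (e1 R n) <-> exists2 c : 'rV[R]_n, S c & 1 <= c ord0 (Ordinal hn)) &
      ((submult /\ nrm id = 1) <->
         (forall A : V -> V, bounded_linear ip A -> nrm A = opnorm ip A))].
Proof.
move=> nrm submult.
have ipP := hilbert_inner_product hH.
have [fN _] := hf.
have S_ge0 c (Sc : S c) := (hSord c Sc).2.
have [e he] := hdim; set x := e (Ordinal hn).
have hx : hnorm ip x = 1 by rewrite /hnorm he eqxx sqrtr1.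
have e1P := f_e1_ge1P hn ipP hSmax hx.
have s1_le := singval1_le_norm ipP S_ge0 hSmax.
have submult_of := norm_submult fN ipP S_ge0 hSmax.
have submultE : submult <-> 1 <= f (e1 R n).
  split=> [sm|/e1P/s1_le]; last exact: submult_of.
  exact: (submult_f_e1_ge1 hn fN ipP hx sm).
split.
- by split=> [/submultE/e1P/s1_le|]; last exact: submult_of.
- split=> [/submultE e1_ge1|[y [z [hy hz]]]].
    by exists x, x; rewrite /nrm singvals_rank_one.
  by rewrite /nrm singvals_rank_one // => /submultE.
- exact: submultE.
- exact: e1P.
split=> [[/submultE/e1P/s1_le s1_le_nrm id1] A blA|nrm_op].
  have id_le1 : nrm id <= 1 by rewrite id1.
  apply/le_anti/andP; split.
    exact: (norm_le_opnorm ipP S_ge0 hSmax hdim id_le1 blA).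
  by rewrite -(singval1 ipP A); exact: (s1_le_nrm A blA).
split=> [A B blA blB|].
  rewrite !nrm_op //; first exact: (opnorm_comp_le ipP blA blB).
  exact: (bounded_linear_comp ipP blA blB).
by rewrite (nrm_op id (bounded_linear_id ip)) (opnorm_id ipP hx).
Qed.
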